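(* For $i = 0,\dots,2^n-1$, the row $i$ word $m_i(n)$ in the matrix $M_n$ (the $i$-th Gray code word of length $n$) is equal to $\lambda_0([i]_2^R)^R$, where $R$ denotes word reversal and $[i]_2$ is the length $n$ binary representation of $i$ with the least significant digit first (including leading zeros, if necessary).
   Context: Let $X_2=\{0,1\}$. Define matrices $M_n$ of size $2^n \times n$ with entries in $X_2$ recursively by \[ M_1 = \begin{bmatrix} 0 \\ 1 \end{bmatrix}, \qquad M_{n+1} = \begin{bmatrix} M_n & 0_n \\ M_n^R & 1_n \end{bmatrix}, \] where $M_n^R$ is obtained from $M_n$ by reversing the order of its rows, and $0_n$, $1_n$ are column vectors with $2^n$ entries all equal to $0$, $1$ respectively; rows are indexed from $0$. The binary tree automorphisms $\lambda_0,\lambda_1$ (the states of the transducer generating the lamplighter group) are defined recursively by $\lambda_0(0w)=0\,\lambda_0(w)$, $\lambda_0(1w)=1\,\lambda_1(w)$, $\lambda_1(0w)=1\,\lambda_0(w)$, $\lambda_1(1w)=0\,\lambda_1(w)$, and $\lambda_0(\emptyset)=\lambda_1(\emptyset)=\emptyset$. *)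

From mathcomp Require Import all_boot.
Set Implicit Arguments. Unset Strict Implicit. Unset Printing Implicit Defensive.

(* Alphabet X_2 = {0,1} encoded as bool (0 = false, 1 = true).
   A matrix over X_2 is represented by its list of rows (row 0 first),
   each row being a word (seq bool), leftmost column first. *)

(* Rows of M_n.  M_0 := [[]] is only an auxiliary base case: it makes
   Mrows 1 = [:: [:: false]; [:: true]] = M_1 by computation, and
   M_{n+1} = [ M_n 0_n ; M_n^R 1_n ]. *)
Fixpoint Mrows (n : nat) : seq (seq bool) :=
  match n with
  | 0 => [:: [::]]
  | k.+1 => [seq rcons r false | r <- Mrows k] ++
            [seq rcons r true  | r <- rev (Mrows k)]
  end.

Definition mrow (n i : nat) : seq bool := nth [::] (Mrows n) i.

Lemma Mrows1 : Mrows 1 = [:: [:: false]; [:: true]].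
Proof. by []. Qed.

(* The lamplighter transducer states lambda_0 (s = false), lambda_1 (s = true):
   reading letter a in state s outputs s xor a and moves to state a. *)
Fixpoint lam (s : bool) (w : seq bool) : seq bool :=
  match w with
  | [::] => [::]
  | a :: w' => (addb s a) :: lam a w'
  end.

Definition lambda0 := lam false.
Definition lambda1 := lam true.

Definition bin (n i : nat) : seq bool := mkseq (fun k => odd (i %/ 2 ^ k)) n.

From mathcomp Require Import all_boot.
From mathcomp Require Import zify.

(* Read least significant digit first, [lambda0] conjugated by reversal maps
   [b_0 ... b_(n-1)] to [(b_0 + b_1) ... (b_(n-2) + b_(n-1)) b_(n-1)], i.e. it
   computes the binary reflected Gray code [i xor (i / 2)].  The reflection
   recursion of [M_(n+1)] matches this code: the lower half has top digit 0 and
   the upper half, read in reverse, has top digit 1 and complemented lower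
   digits, since the [n] low digits of [2^n - 1 - k] are those of [k]
   complemented. *)

Fixpoint gray (w : seq bool) : seq bool :=
  if w is a :: w' then addb a (head false w') :: gray w' else [::].

Lemma lam_rcons s u a : lam s (rcons u a) = rcons (lam s u) (addb (last s u) a).
Proof. by elim: u s => [|b u IH] s //=; rewrite IH. Qed.

Lemma rev_lambda0_rev w : rev (lambda0 (rev w)) = gray w.
Proof.
elim: w => [|a w IH] //=.
rewrite rev_cons /lambda0 lam_rcons rev_rcons -/lambda0 IH addbC.
by case: w {IH} => [|b w] //=; rewrite rev_cons last_rcons.
Qed.

Lemma gray_rcons_false w : gray (rcons w false) = rcons (gray w) false.
Proof. by elim: w => [|a w IH] //=; rewrite IH; case: w {IH}. Qed.

Lemma gray_rcons_true w : gray (rcons w true) = rcons (gray (map negb w)) true.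
Proof.
elim: w => [|a w IH] //=; rewrite IH.
by case: w {IH} => [|b w] /=; case: a => //; case: b.
Qed.

Lemma size_Mrows n : size (Mrows n) = 2 ^ n.
Proof.
elim: n => [|n IH] //=.
by rewrite size_cat !size_map size_rev IH expnS mul2n addnn.
Qed.

Lemma mrowS_lower n i : i < 2 ^ n -> mrow n.+1 i = rcons (mrow n i) false.
Proof.
move=> lt_i.
by rewrite /mrow /= nth_cat size_map size_Mrows lt_i (nth_map [::]) ?size_Mrows.
Qed.

Lemma mrowS_upper n k :
  k < 2 ^ n -> mrow n.+1 (2 ^ n + k) = rcons (mrow n (2 ^ n - 1 - k)) true.
Proof.
move=> lt_k; rewrite /mrow /= nth_cat size_map size_Mrows ltnNge leq_addr /= addKn.
rewrite (nth_map [::]) ?size_rev ?size_Mrows // nth_rev ?size_Mrows //.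
by rewrite subnS predn_sub subn1.
Qed.

Lemma binS n i : bin n.+1 i = rcons (bin n i) (odd (i %/ 2 ^ n)).
Proof. by rewrite /bin /mkseq -[n.+1]addn1 iotaD map_cat cats1. Qed.

Lemma bin_cons n i : bin n.+1 i = odd i :: bin n i./2.
Proof.
rewrite /bin /mkseq /= divn1 (iotaDl 1 0) -map_comp -divn2.
by congr (_ :: _); apply: eq_map => j /=; rewrite expnS divnMA.
Qed.

Lemma binMDl n q r : bin n (q * 2 ^ n + r) = bin n r.
Proof.
apply/eq_in_map => j; rewrite mem_iota add0n => /andP [_ lt_jn].
rewrite -(subnK (ltnW lt_jn)) expnD mulnA divnMDl ?expn_gt0 //.
by rewrite oddD oddM oddX subn_eq0 leqNgt lt_jn andbF.
Qed.

Lemma bin_complement n k : k < 2 ^ n -> bin n (2 ^ n - 1 - k) = map negb (bin n k).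
Proof.
elim: n k => [|n IH] k lt_k //.
rewrite !bin_cons /=; congr (_ :: _).
  by rewrite -subnDA add1n oddB // oddX oddS.
have lt_half : k./2 < 2 ^ n by rewrite -divn2 ltn_divLR // -expnSr.
rewrite -(IH k./2) //; congr (bin n _).
have := odd_double_half k; move: lt_k; rewrite expnS; lia.
Qed.

Lemma mrow_gray n i : i < 2 ^ n -> mrow n i = gray (bin n i).
Proof.
elim: n i => [|n IH] i lt_i; first by case: i lt_i.
case: (ltnP i (2 ^ n)) => [lt_in | le_ni].
  by rewrite mrowS_lower // binS divn_small // gray_rcons_false IH.
have [k -> lt_k] : exists2 k, i = 2 ^ n + k & k < 2 ^ n.
  by exists (i - 2 ^ n); move: lt_i; rewrite expnS; lia.
rewrite mrowS_upper // binS -[in bin n _](mul1n (2 ^ n)) binMDl.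
rewrite divnDl ?dvdnn // divnn expn_gt0 divn_small // gray_rcons_true.
by rewrite -bin_complement // IH //; lia.
Qed.

Theorem mainTheorem11 (n i : nat) :
  1 <= n -> i < 2 ^ n ->
  mrow n i = rev (lambda0 (rev (bin n i))).
Proof. by move=> _ lt_i; rewrite rev_lambda0_rev mrow_gray. Qed.
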